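(* Let $q$ be a nonzero complex number with $q^4\neq1$ and let $\zeta,\zeta'$ be nonzero complex numbers with $\zeta,\zeta',\zeta\zeta'\neq\pm1$. Let $\phi:V(\zeta)\otimes V(\zeta')\to V(\zeta')\otimes V(\zeta)$ be a grading-preserving $U_q(\mathfrak{sl}(1|1))$-module homomorphism, and let $a_1,a_2,b_1,b_2,c_1,c_2$ be the constants with \[\phi(x\otimes x')=a_2\,x'\otimes x,\ \phi(x\otimes y')=c_2\,x'\otimes y+b_2\,y'\otimes x,\ \phi(y\otimes x')=b_1\,x'\otimes y+c_1\,y'\otimes x,\ \phi(y\otimes y')=a_1\,y'\otimes y\] (where $x,y$ and $x',y'$ are the standard bases). Then $a_1a_2+b_1b_2=c_1c_2$.
   Context: $[\zeta]=\frac{\zeta-\zeta^{-1}}{q-q^{-1}}$. $U_q(\mathfrak{sl}(1|1))$ is the associative superalgebra generated by odd $E,F$ and even invertible central $W^{\pm1}$ with $EF+FE=\frac{W-W^{-1}}{q-q^{-1}}$, $E^2=F^2=0$, comultiplication $\Delta(W)=W\otimes W$, $\Delta(E)=E\otimes W^{-1}+1\otimes E$, $\Delta(F)=F\otimes1+W\otimes F$, and tensor products of modules with sign rule $(a\otimes b)(v\otimes w)=(-1)^{|b||v|}(av\otimes bw)$. $V(\zeta)$ has basis $x$ (even), $y$ (odd) with $Ex=0$, $Fx=y$, $Wx=\zeta x$, $Fy=0$, $Ey=[\zeta]x$, $Wy=\zeta y$; $V(\zeta')$ likewise with basis $x',y'$. (Under these hypotheses every such homomorphism has the displayed form.) *)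

From HB Require Import structures.
From mathcomp Require Import all_boot all_order all_algebra.
From mathcomp Require Import reals complex.
Set Implicit Arguments. Unset Strict Implicit. Unset Printing Implicit Defensive.
Import Order.TTheory GRing.Theory Num.Theory.
Local Open Scope ring_scope.

Section UqSl11.
Variable C : fieldType.

Definition qnum (q z : C) : C := (z - z^-1) / (q - q^-1).

(* Basis of V(zeta): false = x (even), true = y (odd).
   An operator on V is given by its coefficients: A k i = coefficient of
   basis vector k in A(basis vector i). *)
Definition op1 := bool -> bool -> C.
(* Operators on a tensor product V(z1) (x) V(z2), basis (i, j) = e_i (x) e_j. *)
Definition op2 := (bool * bool)%type -> (bool * bool)%type -> C.

Definition Eop (q z : C) : op1 := fun k i => if i && ~~ k then qnum q z else 0.
Definition Fop : op1 := fun k i => if ~~ i && k then 1 else 0.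
Definition Wop (z : C) : op1 := fun k i => if k == i then z else 0.
Definition Id1 : op1 := fun k i => if k == i then 1 else 0.

(* a (x) b, with the sign rule (a (x) b)(v (x) w) = (-1)^{|b||v|} (av (x) bw);
   pb is the parity of b. *)
Definition tens (pb : bool) (a b : op1) : op2 :=
  fun kl ij => (-1) ^+ (pb && ij.1) * a kl.1 ij.1 * b kl.2 ij.2.

Definition add2 (A B : op2) : op2 := fun kl ij => A kl ij + B kl ij.
Definition comp2 (A B : op2) : op2 :=
  fun kl ij => \sum_(mn : bool * bool) A kl mn * B mn ij.

(* Actions of E, F, W, W^-1 on V(z1) (x) V(z2) via the coproduct
   D(E) = E (x) W^-1 + 1 (x) E, D(F) = F (x) 1 + W (x) F, D(W) = W (x) W. *)
Definition DE (q z1 z2 : C) : op2 :=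
  add2 (tens false (Eop q z1) (Wop z2^-1)) (tens true Id1 (Eop q z2)).
Definition DF (z1 z2 : C) : op2 :=
  add2 (tens false Fop Id1) (tens true (Wop z1) Fop).
Definition DW (z1 z2 : C) : op2 := tens false (Wop z1) (Wop z2).
Definition DWinv (z1 z2 : C) : op2 := tens false (Wop z1^-1) (Wop z2^-1).

Definition is_hom (q z z' : C) (phi : op2) : Prop :=
  [/\ comp2 phi (DE q z z') = comp2 (DE q z' z) phi,
      comp2 phi (DF z z') = comp2 (DF z' z) phi,
      comp2 phi (DW z z') = comp2 (DW z' z) phi &
      comp2 phi (DWinv z z') = comp2 (DWinv z' z) phi].

Definition parity2 (ij : bool * bool) : bool := addb ij.1 ij.2.

Definition grading_preserving (phi : op2) : Prop :=
  forall kl ij, parity2 kl != parity2 ij -> phi kl ij = 0.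

Definition phi_of (a1 a2 b1 b2 c1 c2 : C) : op2 := fun kl ij =>
  match ij, kl with
  | (false, false), (false, false) => a2
  | (false, true), (false, true) => c2
  | (false, true), (true, false) => b2
  | (true, false), (false, true) => b1
  | (true, false), (true, false) => c1
  | (true, true), (true, true) => a1
  | _, _ => 0
  end.

End UqSl11.

From HB Require Import structures.
From mathcomp Require Import all_boot all_order all_algebra.
From mathcomp Require Import reals complex.
From mathcomp Require Import ring.
Import Order.TTheory GRing.Theory Num.Theory.
Local Open Scope ring_scope.

(* Applying phi o D(F) = D(F) o phi
   to x (x) x' and to x (x) y' and reading off coefficients expresses the
   remaining weights linearly through a2, b2, c2:
     b1 = z' a2 - z c2,   c1 = a2 - z b2,   a1 = c2 - z' b2,
   and then a1 a2 + b1 b2 = c2 (a2 - z b2) = c1 c2. *)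

Lemma sum_bool_pair (V : nmodType) (f : bool * bool -> V) :
  \sum_(mn : bool * bool) f mn =
    f (false, false) + f (false, true) + f (true, false) + f (true, true).
Proof.
rewrite (eq_bigr (fun mn => f (mn.1, mn.2))); last by case.
rewrite -(pair_big xpredT xpredT (fun i j => f (i, j))) /= !big_bool /=.
by rewrite addrC [f (true, true) + _]addrC [f (false, true) + _]addrC !addrA.
Qed.

Section FreeFermion.
Variables (C : fieldType) (z z' a1 a2 b1 b2 c1 c2 : C).
Let phi := phi_of a1 a2 b1 b2 c1 c2.

Lemma phi_of_DF_weights :
  comp2 phi (DF z z') = comp2 (DF z' z) phi ->
  [/\ b1 = z' * a2 - z * c2, c1 = a2 - z * b2 & a1 = c2 - z' * b2].
Proof.
move=> homF.
have eqb1 := congr1 (fun g => g (false, true) (false, false)) homF.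
have eqc1 := congr1 (fun g => g (true, false) (false, false)) homF.
have eqa1 := congr1 (fun g => g (true, true) (false, true)) homF.
move: eqb1 eqc1 eqa1.
rewrite /comp2 !sum_bool_pair /DF /add2 /tens /Fop /Id1 /Wop /phi /phi_of /=.
rewrite ?(mul0r, mulr0, mul1r, mulr1, add0r, addr0, expr0, expr1).
by move=> eqb1 eqc1 ->; split; [rewrite -eqb1 | rewrite -eqc1 |]; ring.
Qed.

Lemma DF_intertwiner_free_fermion :
  comp2 phi (DF z z') = comp2 (DF z' z) phi -> a1 * a2 + b1 * b2 = c1 * c2.
Proof. by case/phi_of_DF_weights=> -> -> ->; ring. Qed.

End FreeFermion.

Theorem proposition5p2 (R : realType) (q z z' : R[i])
  (phi : op2 R[i]) (a1 a2 b1 b2 c1 c2 : R[i]) :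
  q != 0 -> q ^+ 4 != 1 ->
  z != 0 -> z' != 0 ->
  z != 1 -> z != -1 -> z' != 1 -> z' != -1 ->
  z * z' != 1 -> z * z' != -1 ->
  grading_preserving phi ->
  is_hom q z z' phi ->
  phi = phi_of a1 a2 b1 b2 c1 c2 ->
  a1 * a2 + b1 * b2 = c1 * c2.
Proof.
move=> _ _ _ _ _ _ _ _ _ _ _ [_ homF _ _] phiE.
rewrite phiE in homF.
exact: (@DF_intertwiner_free_fermion _ z z' a1 a2 b1 b2 c1 c2 homF).
Qed.
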